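(* Let $X$ and $Y$ be Hausdorff compact spaces and $\pi: X \to Y$ a fully closed continuous surjection. For each $y \in Y$ fix a point $0_y \in \pi^{-1}(y)$ and let $H^0_y = \{g \in C(\pi^{-1}(y)) : g(0_y) = 0\}$ with the supremum norm. Let $H = \bigoplus_{c_0(Y)} H^0_y$ be the $c_0$-sum, i.e. the space of families $h = (h_y)_{y\in Y}$ with $h_y \in H^0_y$ such that for every $\varepsilon>0$ the set $\{y : \|h_y\| > \varepsilon\}$ is finite, normed by $\|h\| = \sup_y \|h_y\|$. For $f \in C(X)$ put $f_y = \left(f - f(0_y)\right)|_{\pi^{-1}(y)} \in H^0_y$ and $T f = (f_y)_{y \in Y}$. Then for every $h \in H$ there exists $f \in C(X)$ with $Tf = h$; that is, $T$ maps $C(X)$ onto $H$.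
   Context: A continuous surjection $\pi: X \to Y$ between Hausdorff compacta is fully closed if for any two closed disjoint subsets $F_1, F_2 \subset X$ the set $\pi(F_1)\cap\pi(F_2)$ is finite. $C(K)$ denotes the Banach space of real continuous functions on $K$ with the sup norm. *)

From HB Require Import structures.
From mathcomp Require Import all_boot all_order all_algebra.
From mathcomp Require Import all_classical all_reals all_analysis.
Set Implicit Arguments. Unset Strict Implicit. Unset Printing Implicit Defensive.
Import Order.TTheory GRing.Theory Num.Theory.
Import numFieldNormedType.Exports.
Local Open Scope classical_set_scope.
Local Open Scope ring_scope.

(* A continuous surjection pi : X -> Y is fully closed if for any two closed
   disjoint subsets F1, F2 of X the set pi(F1) /\ pi(F2) is finite.
   (Continuity and surjectivity are stated separately in the theorem.) *)
Definition fully_closed (X Y : topologicalType) (pi : X -> Y) : Prop :=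
  forall F1 F2 : set X, closed F1 -> closed F2 -> F1 `&` F2 = set0 ->
    finite_set (pi @` F1 `&` pi @` F2).

Definition fibre (X Y : Type) (pi : X -> Y) (y : Y) : set X := pi @^-1` [set y].

(* Each h_y is represented by a function X -> R of which only its restriction
   to the fibre pi^{-1}(y) matters. The condition ||h_y|| > eps (sup norm over
   the fibre) is written out as "some point of the fibre has |h_y x| > eps". *)
Definition in_c0_sum (X Y : topologicalType) (R : realType) (pi : X -> Y)
    (zero : Y -> X) (h : Y -> X -> R) : Prop :=
  (forall y, {within fibre pi y, continuous (h y)}) /\
  (forall y, h y (zero y) = 0) /\
  (forall eps : R, 0 < eps ->
     finite_set [set y | exists2 x, fibre pi y x & eps < `|h y x|]).

(* T f = (f_y)_y with f_y = (f - f(0_y)) restricted to the fibre; T f = h means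
   equality of each component as functions on the fibre. *)
Definition T_eq (X Y : Type) (R : realType) (pi : X -> Y) (zero : Y -> X)
    (f : X -> R) (h : Y -> X -> R) : Prop :=
  forall y x, fibre pi y x -> f x - f (zero y) = h y x.

From HB Require Import structures.
From mathcomp Require Import all_boot all_order all_algebra.
From mathcomp Require Import all_classical all_reals all_analysis.
From mathcomp Require Import ring lra.
Import Order.TTheory GRing.Theory Num.Theory.
Import numFieldNormedType.Exports.
Local Open Scope classical_set_scope.
Local Open Scope ring_scope.

(* Since pi is fully closed, a continuous function on X oscillates by more than
   a given d > 0 on only finitely many fibres.  Suppose f is continuous and the
   residual h - T f has norm at most M.  Only finitely many fibres carry
   residual above M/3; a signed Urysohn function u on X, vanishing at their base
   points, brings the residual there down to 2M/3.  Multiplying u by a Urysohn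
   function of Y that is 1 on these fibres and 0 on the finitely many others
   where u oscillates by more than M/3 gives a correction d with |d| <= M/3 such
   that f + d has residual at most 2M/3.  Iterating from f = 0 yields a
   uniformly Cauchy sequence of continuous functions whose limit has residual
   zero. *)

Lemma compact_normr_bound {R : realType} {A : set R} :
  compact A -> exists N : R, forall r, A r -> `|r| <= N.
Proof.
move=> /compact_bounded[M [_ HM]]; exists (`|M| + 1) => r Ar.
by apply: (HM (`|M| + 1)) => //; rewrite (le_lt_trans (ler_norm M)) // ltrDl.
Qed.

Lemma indexed_dependent_choice (A : Type) (P : nat -> A -> Prop)
    (Q : nat -> A -> A -> Prop) (a0 : A) :
  P 0%N a0 -> (forall n a, P n a -> exists2 b, P n.+1 b & Q n a b) ->
  exists s : nat -> A, s 0%N = a0 /\ forall n, P n (s n) /\ Q n (s n) (s n.+1).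
Proof.
move=> P0 next.
have /choice[f Hf] : forall na : nat * A, exists b,
    P na.1 na.2 -> P na.1.+1 b /\ Q na.1 na.2 b.
  move=> [n a]; have [Pna|nPna] := pselect (P n a); last by exists a.
  by have [b Pb Qb] := next n a Pna; exists b.
pose s := fix s n := if n is m.+1 then f (m, s m) else a0.
exists s; split => // n; suff Ps : P n (s n) by split => //; exact: (Hf (n, s n) Ps).2.
by elim: n => //= n IH; exact: (Hf (n, s n) IH).1.
Qed.

Lemma cvg0_normr_le_eq0 {R : realType} {r : R} {e : nat -> R} :
  e @ \oo --> 0 -> (forall n, `|r| <= e n) -> r = 0.
Proof.
move=> e0 re; have [//|r0] := eqVneq r 0.
have /(cvgr0_norm_lt e e0)[N _ HN] : 0 < `|r| by rewrite normr_gt0.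
by have := HN N (leqnn N); rewrite ltNge (le_trans (re N) (ler_norm _)).
Qed.

Lemma geometric_increments_cauchy {R : realType} {u : nat -> R} {C q : R} :
  0 <= C -> 0 <= q -> (forall n, `|u n.+1 - u n| <= C * q ^+ n * (1 - q)) ->
  forall n m, (n <= m)%N -> `|u m - u n| <= C * q ^+ n.
Proof.
move=> C0 q0 du n m /subnK <-.
suff : `|u (m - n + n)%N - u n| <= C * (q ^+ n - q ^+ (m - n + n)).
  by move/le_trans; apply; rewrite ler_wpM2l // lerBlDr lerDl exprn_ge0.
elim: (m - n)%N => [|k IH]; first by rewrite add0n !subrr normr0 mulr0.
rewrite addSn -[u _ - u n](subrKA (u (k + n)%N)) (le_trans (ler_normD _ _)) //.
have := du (k + n)%N; rewrite exprS; lra.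
Qed.

Lemma uniform_approx_continuous {R : realType} {T : topologicalType} (g : T -> R) :
  (forall eps, 0 < eps -> exists2 f : T -> R, continuous f & forall x, `|g x - f x| <= eps) ->
  continuous g.
Proof.
move=> approx x0; apply/cvgrPdist_lt => eps eps0.
have e3 : 0 < eps / 3 by rewrite divr_gt0.
have [f cf gf] := approx _ e3.
have := cf x0; move/cvgrPdist_lt/(_ _ e3); apply: filterS => x.
have := gf x; have := gf x0; rewrite !ler_norml !ltr_norml.
by move=> /andP[? ?] /andP[? ?] /andP[? ?]; apply/andP; split; lra.
Qed.

Lemma uniformly_cauchy_limit {R : realType} {T : topologicalType}
    {f : nat -> T -> R} {e : nat -> R} :
  e @ \oo --> 0 -> (forall n, continuous (f n)) ->
  (forall n m x, (n <= m)%N -> `|f m x - f n x| <= e n) ->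
  exists2 g : T -> R, continuous g & forall n x, `|g x - f n x| <= e n.
Proof.
move=> e0 cf fcauchy.
have sandwich n m x : f n x - e n <= f m x + e m.
  have [nm|/ltnW mn] := leqP n m.
    have := fcauchy n m x nm; have := fcauchy m m x (leqnn m).
    rewrite subrr normr0 ler_norml; lra.
  have := fcauchy m n x mn; have := fcauchy n n x (leqnn n).
  rewrite subrr normr0 ler_norml; lra.
pose g x := inf (range (fun n => f n x + e n)).
have gf n x : `|g x - f n x| <= e n.
  rewrite ler_norml; apply/andP; split.
    suff : f n x - e n <= g x by lra.
    apply: lb_le_inf; first by exists (f 0%N x + e 0%N); exists 0%N.
    by move=> _ [m _ <-]; exact: sandwich.
  suff : g x <= f n x + e n by lra.
  apply: ge_inf; last by exists n.
  by exists (f 0%N x - e 0%N) => _ [m _ <-]; exact: sandwich.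
exists g => //; apply: uniform_approx_continuous => eps eps0.
have /(cvgr0_norm_lt e e0)[N _ HN] := eps0.
exists (f N) => // x; apply: (le_trans (gf N x)).
exact: le_trans (ler_norm _) (ltW (HN N (leqnn N))).
Qed.

Lemma grid_point_between {R : realType} {N e t : R} : 0 < e -> `|t| <= N ->
  exists2 k : nat, (k <= Num.truncn (2 * N / e))%N & t - e <= - N + k%:R * e <= t.
Proof.
move=> e0; rewrite ler_norml => /andP[tN1 tN2].
pose s := (t + N) / e.
have sE : s * e = t + N by rewrite /s mulrVK // unitfE gt_eqF.
exists (Num.truncn s); first by apply: le_truncn; rewrite ler_pM2r ?invr_gt0 //; lra.
have s0 : 0 <= s by apply: divr_ge0; [lra | exact: ltW].
have lo : (Num.truncn s)%:R <= s by rewrite truncn_le.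
have hi := truncnS_gt s; rewrite -natr1 in hi.
have : (Num.truncn s)%:R * e <= s * e by rewrite ler_pM2r.
have : s * e < ((Num.truncn s)%:R + 1) * e by rewrite ltr_pM2r.
lra.
Qed.

Lemma signed_urysohn {R : realType} {T : topologicalType} {A B Z : set T} {r : R} :
  normal_space T -> closed A -> closed B -> closed Z ->
  A `&` B = set0 -> A `&` Z = set0 -> B `&` Z = set0 -> 0 < r ->
  exists u : T -> R, [/\ continuous u, forall x, `|u x| <= r,
    forall x, A x -> u x = - r, forall x, B x -> u x = r & forall x, Z x -> u x = 0].
Proof.
move=> nT cA cB cZ AB AZ BZ r0.
have AZ_B : (A `|` Z) `&` B = set0 by rewrite setIUl AB setIC BZ setU0.
have BZ_A : (B `|` Z) `&` A = set0 by rewrite setIUl setIC AB setIC AZ setU0.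
have [u1 [cu1 u1AZ u1B u1r]] := urysohn_ext_itv nT (closedU cA cZ) cB AZ_B r0.
have [u2 [cu2 u2BZ u2A u2r]] := urysohn_ext_itv nT (closedU cB cZ) cA BZ_A r0.
have u1_itv x : 0 <= u1 x <= r by have /u1r := imageT u1 x; rewrite /= in_itv.
have u2_itv x : 0 <= u2 x <= r by have /u2r := imageT u2 x; rewrite /= in_itv.
exists (u1 \- u2); split.
- by move=> x; apply: cvgB; [exact: cu1 | exact: cu2].
- move=> x /=; have := u1_itv x; have := u2_itv x.
  rewrite ler_norml => /andP[? ?] /andP[? ?].
  by apply/andP; split; lra.
- move=> x Ax /=.
  have -> : u1 x = 0 by apply: u1AZ; exists x => //; left.
  have -> : u2 x = r by apply: u2A; exists x.
  by rewrite sub0r.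
- move=> x Bx /=.
  have -> : u1 x = r by apply: u1B; exists x.
  have -> : u2 x = 0 by apply: u2BZ; exists x => //; left.
  by rewrite subr0.
- move=> x Zx /=.
  have -> : u1 x = 0 by apply: u1AZ; exists x => //; right.
  have -> : u2 x = 0 by apply: u2BZ; exists x => //; right.
  by rewrite subr0.
Qed.

Lemma signed_cut_bound (R : realFieldType) (M e u : R) :
  `|e| <= M -> `|u| <= M / 3 -> (e <= - (M / 3) -> u = - (M / 3)) ->
  (M / 3 <= e -> u = M / 3) -> `|e - u| <= M * (2 / 3).
Proof.
rewrite !ler_norml => /andP[e1 e2] /andP[u1 u2] eA eB.
have [e3|e3] := leP e (- (M / 3)); first by rewrite eA //; apply/andP; split; lra.
have [e4|e4] := leP (M / 3) e; first by rewrite eB //; apply/andP; split; lra.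
by apply/andP; split; lra.
Qed.

Section FullyClosedMaps.
Variables (R : realType) (X Y : topologicalType).
Hypotheses (hX : hausdorff_space X) (cX : compact [set: X])
  (hY : hausdorff_space Y) (cY : compact [set: Y]).
Variable pi : X -> Y.
Hypotheses (pi_cont : continuous pi) (pi_fc : fully_closed pi).

Lemma closed_fibre y : closed (fibre pi y).
Proof.
apply: (continuous_closedP _).1 => //.
exact/accessible_closed_set1/hausdorff_accessible.
Qed.

Lemma closed_fibrewise {P : set Y} {g : Y -> X -> R} {S : set R} :
  finite_set P -> (forall y, {within fibre pi y, continuous (g y)}) -> closed S ->
  closed [set x | P (pi x) /\ S (g (pi x) x)].
Proof.
move=> fP cg cS.
have -> : [set x | P (pi x) /\ S (g (pi x) x)] =
    \bigcup_(y in P) (fibre pi y `&` g y @^-1` S).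
  apply/seteqP; split => [x [Px Sx]|x [y Py [/= -> Sx]]] //.
  by exists (pi x).
apply: closed_bigcup => // y _; rewrite closed_setSI; last exact: closed_fibre.
by apply: preimage_closed => // x _; exact: cg.
Qed.

Definition oscillating_fibres (v : X -> R) (d : R) : set Y :=
  [set y | exists x x', [/\ pi x = y, pi x' = y & d < `|v x - v x'|]].

Lemma finite_oscillating_fibres {v : X -> R} {d : R} :
  continuous v -> 0 < d -> finite_set (oscillating_fibres v d).
Proof.
move=> cv d0.
have [N vN] : exists N : R, forall x, `|v x| <= N.
  have [N HN] := compact_normr_bound (continuous_compact (continuous_subspaceT cv) cX).
  by exists N => x; apply: HN; exists x.
pose e := d / 2; have e0 : 0 < e by rewrite divr_gt0.
have de : d = e * 2 by rewrite /e mulfVK.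
pose c (k : nat) := - N + k%:R * e.
pose A k := [set x | v x <= c k + e].
pose B k := [set x | c k + e * 2 <= v x].
pose K := (Num.truncn (2 * N / e)).+1.
(* A jump by more than 2e straddles a grid level c k, so the fibre meets the
   disjoint closed sets A k and B k. *)
have jump x x' : pi x = pi x' -> v x + d < v x' ->
    (\bigcup_(k in `I_K) (pi @` A k `&` pi @` B k)) (pi x).
  move=> pxx' vxx'; have [k kK /andP[k1 k2]] := grid_point_between e0 (vN x).
  exists k; first by rewrite /= ltnS.
  by split; [exists x | exists x'] => //; rewrite /A /B /c /=; lra.
apply: (@sub_finite_set _ _ (\bigcup_(k in `I_K) (pi @` A k `&` pi @` B k))).
  move=> y [x [x' [<- px' /[!ltr_normr] /orP[vxx'|vxx']]]].
    by rewrite -px'; apply: (jump x' x) => //; lra.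
  by apply: (jump x x') => //; lra.
apply: bigcup_finite; first exact: finite_II.
move=> k _; apply: pi_fc.
- exact: (continuous_closedP v).1 cv _ (@closed_le R _).
- exact: (continuous_closedP v).1 cv _ (@closed_ge R _).
- by apply/seteqP; split => x // [Ax Bx]; rewrite /A /B /= in Ax Bx; lra.
Qed.

Lemma localize_on_fibres {u : X -> R} {P : set Y} {r : R} :
  continuous u -> finite_set P -> 0 < r -> (forall x, `|u x| <= r) ->
  exists2 d : X -> R, continuous d & [/\ forall x, `|d x| <= r,
    forall x, P (pi x) -> d x = u x &
    forall x x', ~ P (pi x) -> pi x = pi x' -> `|d x - d x'| <= r].
Proof.
move=> cu fP r0 ur.
have closed_finite := (@accessible_finite_set_closed Y).1 (hausdorff_accessible hY).
pose Q := oscillating_fibres u r.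
have QP : (Q `\` P) `&` P = set0 by apply/seteqP; split => y // [[_ nPy] Py].
have [a [ca aQ aP ar]] := urysohn_ext_itv (compact_normal hY cY)
  (closed_finite _ (finite_setD P (finite_oscillating_fibres cu r0)))
  (closed_finite _ fP) QP (@ltr01 R).
have a_contract y (t : R) : `|a y * t| <= `|t|.
  have /ar := imageT a y; rewrite /= in_itv => /andP[a0 a1].
  by rewrite normrM ger0_norm // ler_piMl.
exists ((a \o pi) \* u).
  move=> x; apply: continuousM; last exact: cu.
  by apply: continuous_comp; [exact: pi_cont | exact: ca].
split => [x|x Px|x x' nPx pxx'] /=.
- exact: le_trans (a_contract _ _) (ur x).
- have -> : a (pi x) = 1 by apply: aP; exists (pi x).
  by rewrite mul1r.
- rewrite -pxx' -mulrBr.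
  have [Qx|nQx] := pselect (Q (pi x)).
    have -> : a (pi x) = 0 by apply: aQ; exists (pi x).
    by rewrite mul0r normr0 ltW.
  apply: le_trans (a_contract _ _) _; rewrite leNgt; apply/negP => big.
  by apply: nQx; exists x, x'.
Qed.

Section Residual.
Variable zero : Y -> X.
Hypothesis zero_fibre : forall y, pi (zero y) = y.
Variable h : Y -> X -> R.
Hypothesis hH : in_c0_sum pi zero h.

Definition residual (f : X -> R) y x := h y x - (f x - f (zero y)).

Definition residual_le (M : R) (f : X -> R) := forall x, `|residual f (pi x) x| <= M.

Lemma residual_sub f g y x :
  residual g y x = residual f y x - ((g x - f x) - (g (zero y) - f (zero y))).
Proof. by rewrite /residual; ring. Qed.

Lemma residual_at_zero f y : residual f y (zero y) = 0.
Proof. by rewrite /residual hH.2.1 subrr subr0. Qed.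

Lemma residual_continuous_fibre f y :
  continuous f -> {within fibre pi y, continuous (residual f y)}.
Proof.
move=> cf x; apply: cvgB; first exact: hH.1.
by apply: cvgB; [exact: continuous_subspaceT | exact: cvg_cst].
Qed.

Lemma finite_large_residual {f eps} : continuous f -> 0 < eps ->
  finite_set [set y | exists2 x, pi x = y & eps < `|residual f y x|].
Proof.
move=> cf eps0; have e2 : 0 < eps / 2 by rewrite divr_gt0.
apply: (@sub_finite_set _ _ ([set y | exists2 x, fibre pi y x & eps / 2 < `|h y x|]
    `|` oscillating_fibres f (eps / 2))); last first.
  by rewrite finite_setU; split; [exact: hH.2.2 | exact: finite_oscillating_fibres].
move=> y [x px big]; have [hbig|hsmall] := ltP (eps / 2) `|h y x|; first by left; exists x.
right; exists x, (zero y); split => //.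
have [//|fsmall] := ltP (eps / 2) `|f x - f (zero y)|.
by have := ler_normB (h y x) (f x - f (zero y)); rewrite /residual in big; lra.
Qed.

Lemma c0_sum_bounded : exists2 M : R, 0 < M & forall x, `|h (pi x) x| <= M.
Proof.
have /choice[N HN] : forall y, exists N : R, forall x, pi x = y -> `|h y x| <= N.
  move=> y; have cF : compact (fibre pi y) by exact: subclosed_compact (closed_fibre y) cX _.
  have [N HN] := compact_normr_bound (continuous_compact (hH.1 y) cF).
  by exists N => x px; apply: HN; exists x.
have [K HK] := compact_normr_bound (finite_compact (finite_image N (hH.2.2 1 ltr01))).
exists (Num.max 1 K); first by rewrite lt_max ltr01.
move=> x; have [small|big] := leP `|h (pi x) x| 1; first by rewrite le_max small.
rewrite le_max; apply/orP; right; apply: le_trans (HN _ x erefl) _.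
by apply: le_trans (ler_norm _) (HK _ _); exists (pi x) => //; exists x.
Qed.

Lemma fibre_correction {f M} {P : set Y} :
  continuous f -> 0 < M -> finite_set P -> residual_le M f ->
  exists2 u : X -> R, continuous u & [/\ forall x, `|u x| <= M / 3,
    forall y, P y -> u (zero y) = 0 &
    forall x, P (pi x) -> `|residual f (pi x) x - u x| <= M * (2 / 3)].
Proof.
move=> cf M0 fP fM; have M3 : 0 < M / 3 by rewrite divr_gt0.
pose A := [set x | P (pi x) /\ residual f (pi x) x <= - (M / 3)].
pose B := [set x | P (pi x) /\ M / 3 <= residual f (pi x) x].
have cres y := residual_continuous_fibre f y cf.
have cA : closed A := closed_fibrewise fP cres (@closed_le R _).
have cB : closed B := closed_fibrewise fP cres (@closed_ge R _).
have cZ : closed (zero @` P).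
  exact: (@accessible_finite_set_closed X).1 (hausdorff_accessible hX) _ (finite_image _ fP).
have AB : A `&` B = set0 by apply/seteqP; split => x // [[_ ?] [_ ?]]; lra.
have AZ : A `&` zero @` P = set0.
  apply/seteqP; split => x // [[_]] + [y _ zy]; rewrite -zy zero_fibre residual_at_zero; lra.
have BZ : B `&` zero @` P = set0.
  apply/seteqP; split => x // [[_]] + [y _ zy]; rewrite -zy zero_fibre residual_at_zero; lra.
have [u [cu ur uA uB uZ]] := signed_urysohn (compact_normal hX cX) cA cB cZ AB AZ BZ M3.
exists u => //; split => // [y Py|x Px]; first by apply: uZ; exists y.
apply: signed_cut_bound; [exact: fM | exact: ur | move=> ? | move=> ?].
- by apply: uA; split.
- by apply: uB; split.
Qed.

Lemma residual_contract {f M} : continuous f -> 0 < M -> residual_le M f ->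
  exists2 g : X -> R, continuous g &
    (forall x, `|g x - f x| <= M / 3) /\ residual_le (M * (2 / 3)) g.
Proof.
move=> cf M0 fM; have M3 : 0 < M / 3 by rewrite divr_gt0.
pose P := [set y | exists2 x, pi x = y & M / 3 < `|residual f y x|].
have fP : finite_set P := finite_large_residual cf M3.
have [u cu [ur u0 uP]] := fibre_correction cf M0 fP fM.
have [d cd [dr dP dnP]] := localize_on_fibres cu fP M3 ur.
exists (f \+ d); first by move=> x; apply: continuousD; [exact: cf | exact: cd].
have fdf z : (f \+ d) z - f z = d z by rewrite /= addrC addKr.
split => x; first by rewrite fdf.
rewrite (residual_sub f) !fdf.
have [Px|nPx] := pselect (P (pi x)).
  by rewrite !dP ?zero_fibre // u0 // subr0; exact: uP.
have small : `|residual f (pi x) x| <= M / 3.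
  by rewrite leNgt; apply/negP => big; apply: nPx; exists x.
have := dnP x (zero (pi x)) nPx (esym (zero_fibre _)).
have := ler_normB (residual f (pi x) x) (d x - d (zero (pi x))); lra.
Qed.

Lemma T_surjective : exists f : X -> R, continuous f /\ T_eq pi zero f h.
Proof.
have [M0 M0_gt0 hM0] := c0_sum_bounded.
pose q : R := 2 / 3; have q0 : 0 < q by rewrite divr_gt0.
have q1 : `|q| < 1 by rewrite gtr0_norm // ltr_pdivrMr // mul1r ltr_nat.
have [|n f [cf fM]|s [_ Hs]] := @indexed_dependent_choice _
  (fun n f => continuous f /\ residual_le (geometric M0 q n) f)
  (fun n f g => forall x, `|g x - f x| <= geometric M0 q n * (1 - q)) (fun=> 0).
- split=> [|x]; first exact: cst_continuous.
  by rewrite /residual /= subrr subr0 expr0 mulr1; exact: hM0.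
- have Mn : 0 < geometric M0 q n by rewrite /= mulr_gt0 ?exprn_gt0.
  have [g cg [gf gM]] := residual_contract cf Mn fM.
  exists g; first by split => // x; rewrite /= exprSr mulrA.
  by move=> x; apply: le_trans (gf x) _; rewrite /q; lra.
have [g cg gs] := uniformly_cauchy_limit (cvg_geometric M0 q1) (fun n => (Hs n).1.1)
  (fun n m x => geometric_increments_cauchy (ltW M0_gt0) (ltW q0) (fun k => (Hs k).2 x) n m).
exists g; split => // y x /= <-.
have : residual g (pi x) x = 0.
  apply: (cvg0_normr_le_eq0 (cvg_geometric (M0 * 3) q1)) => n.
  rewrite (residual_sub (s n)).
  have := ler_normB (residual (s n) (pi x) x)
    ((g x - s n x) - (g (zero (pi x)) - s n (zero (pi x)))).
  have := ler_normB (g x - s n x) (g (zero (pi x)) - s n (zero (pi x))).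
  have := (Hs n).1.2 x; have := gs n x; have := gs n (zero (pi x)); rewrite /=; lra.
by move/eqP; rewrite subr_eq0 => /eqP ->.
Qed.

End Residual.
End FullyClosedMaps.

Theorem lemma4p5 (R : realType) (X Y : topologicalType)
  (hX : hausdorff_space X) (cX : compact [set: X])
  (hY : hausdorff_space Y) (cY : compact [set: Y])
  (pi : X -> Y) (pi_cont : continuous pi) (pi_surj : forall y, exists x, pi x = y)
  (pi_fc : fully_closed pi)
  (zero : Y -> X) (zero_fibre : forall y, pi (zero y) = y)
  (h : Y -> X -> R) (hH : in_c0_sum pi zero h) :
  exists f : X -> R, continuous f /\ T_eq pi zero f h.
Proof.
exact: (@T_surjective R X Y hX cX hY cY pi pi_cont pi_fc zero zero_fibre h hH). Qed.
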